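(* Let $N=2p$ and let $2^{-1}$ denote the inverse of $2$ modulo $2^N-1$. Then (1) $S(2)\equiv \big(1-(2^p+1)2^{-1}\big)+(2^p+1)2^{-1}\cdot\frac{2^{N}-1}{3}-2^{-1}\Big(\big(\tfrac{2}{p}\big)2^p+1\Big)G_p \pmod{2^N-1}$; (2) $G_p^2\equiv\big(\tfrac{-1}{p}\big)\Big(p-\frac{2^N-1}{3}\Big)\pmod{2^N-1}$.
   Context: Let $p$ be an odd prime and $g$ an odd integer which is a primitive root modulo $p$ and modulo $2p$. Define $D_0^{(p)}=\{g^{2k}\bmod p : 0\le k\le \frac{p-1}{2}-1\}$, $D_1^{(p)}=\{g^{2k+1}\bmod p : 0\le k\le \frac{p-1}{2}-1\}$, $D_0^{(2p)}=\{g^{2k}\bmod 2p : 0\le k\le \frac{p-1}{2}-1\}$, $D_1^{(2p)}=\{g^{2k+1}\bmod 2p : 0\le k\le \frac{p-1}{2}-1\}$, viewed as subsets of $\{0,\dots,p-1\}$ resp. $\{0,1,\dots,2p-1\}$. For $j\in\{0,1\}$ let $2D_j^{(p)}=\{2a \bmod 2p : a\in D_j^{(p)}\}$. Let $C_1=D_1^{(2p)}\cup 2D_1^{(p)}\cup\{0\}$ and $C_0=D_0^{(2p)}\cup 2D_0^{(p)}\cup\{p\}$ (these partition $\{0,\dots,2p-1\}$). The binary sequence $s$ of period $2p$ is $s_i=1$ if $i\bmod 2p\in C_1$ and $s_i=0$ otherwise, and $S(x)=\sum_{i=0}^{2p-1}s_ix^i\in\mathbb{Z}[x]$, so $S(2)=\sum_{i=0}^{2p-1}s_i2^i$.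 Here $\left(\frac{a}{p}\right)$ is the Legendre symbol, and $G_p=\sum_{a=1}^{p-1}\left(\frac{a}{p}\right)2^{2a}\bmod (2^{2p}-1)$. *)

From HB Require Import structures.
From mathcomp Require Import all_boot all_order all_algebra.
Set Implicit Arguments. Unset Strict Implicit. Unset Printing Implicit Defensive.
Import Order.TTheory GRing.Theory Num.Theory.

Definition primitive_root (g n : nat) : bool :=
  coprime g n && (g ^ totient n %% n == 1 %% n) &&
  [forall k : 'I_(totient n), (0 < k) ==> (g ^ k %% n != 1 %% n)].

Definition legendre (a : int) (p : nat) : int :=
  if (p%:Z %| a)%Z then 0%R
  else if [exists x : 'I_p, (p%:Z %| (x%:Z ^+ 2 - a)%R)%Z] then 1%R else (-1)%R.

Definition half (p : nat) : nat := (p.-1)./2.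

Definition D0p (g p : nat) : seq nat := [seq g ^ (2 * k) %% p | k <- iota 0 (half p)].
Definition D1p (g p : nat) : seq nat := [seq g ^ (2 * k + 1) %% p | k <- iota 0 (half p)].
Definition D02p (g p : nat) : seq nat := [seq g ^ (2 * k) %% (2 * p) | k <- iota 0 (half p)].
Definition D12p (g p : nat) : seq nat := [seq g ^ (2 * k + 1) %% (2 * p) | k <- iota 0 (half p)].

Definition twoD (p : nat) (D : seq nat) : seq nat := [seq (2 * a) %% (2 * p) | a <- D].

Definition C1 (g p : nat) : seq nat := D12p g p ++ twoD p (D1p g p) ++ [:: 0].

Definition s_seq (g p i : nat) : nat := (i %% (2 * p) \in C1 g p : nat).

Definition S2 (g p : nat) : int := (\sum_(i < 2 * p) (s_seq g p i)%:Z * 2%:Z ^+ i)%R.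

Definition Gp (p : nat) : int :=
  ((\sum_(1 <= a < p) legendre a%:Z p * 2%:Z ^+ (2 * a))%R %% (2%:Z ^+ (2 * p) - 1)%R)%Z.

From Pilot Require Import Defs.
From HB Require Import structures.
From mathcomp Require Import all_boot all_order all_algebra.
From mathcomp Require Import zify ring.
Set Implicit Arguments. Unset Strict Implicit. Unset Printing Implicit Defensive.
Import Order.TTheory GRing.Theory Num.Theory.
Local Open Scope ring_scope.

(* Both congruences are equalities in the ring Z_M, M = 2^(2p) - 1, in which
   w = 2 is a 2p-th root of unity, x = w^2 = 4 is a p-th root of unity and
   M/3 = 1 + 4 + ... + 4^(p-1) is the period sum T of x.
   - First, congruences modulo n are transported to 'Z_n, and sums over the
     residues mod p are reindexed by multiplication and translation.
   - The Legendre symbol is the quadratic character chi of 'Z_p; through the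
     primitive root g we get chi(g^m) = (-1)^m, hence chi is multiplicative,
     sums to 0 over 1..p-1, and D_1^(p) is exactly its set of non-residues.
   - In any commutative ring, for a quadratic character chi and x^p = 1, the
     Gauss sum G = sum chi(a) x^a satisfies G^2 = chi(-1) (p - T); and a
     binary sequence of period 2p built from {0} u D and D (as C_1 is) has
     evaluation 1 + (T-1-G)/2 + w^p (T-1-chi(2) G)/2 at w.
   - Since g is odd, C_1 has exactly this shape (Chinese remaindering mod 2p).
   The theorem follows by specializing to R = 'Z_M, w = 2, 1/2 = inv2. *)

Section ResidueRing.
Variable n : nat.
Hypothesis n_gt1 : (1 < n)%N.

Lemma Zn_natE (a b : nat) : ((a%:R : 'Z_n) == b%:R) = (a == b %[mod n])%N.
Proof. by rewrite -val_eqE /= !val_Zp_nat. Qed.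

Lemma Zn_nat_neq0 (a : nat) : (0 < a < n)%N -> (a%:R : 'Z_n) != 0.
Proof.
move=> /andP[a_gt0 a_lt_n].
by rewrite [0](_ : _ = 0%:R) // Zn_natE // mod0n modn_small // -lt0n.
Qed.

Lemma Zn_int_eq0 (z : int) : ((z%:~R : 'Z_n) == 0) = (n%:Z %| z)%Z.
Proof.
case: z => k; last rewrite NegzE intrN oppr_eq0.
all: by rewrite -pmulrn [0 in LHS](_ : _ = 0%:R) // Zn_natE // mod0n dvdzE /=.
Qed.

Lemma Zn_intE (a b : int) : ((a%:~R : 'Z_n) == b%:~R) = (a == b %[mod n%:Z])%Z.
Proof. by rewrite eqz_mod_dvd -Zn_int_eq0 intrB subr_eq0. Qed.

Lemma Zn_modz (z : int) : (((z %% n%:Z)%Z)%:~R : 'Z_n) = z%:~R.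
Proof. by apply/eqP; rewrite Zn_intE modz_mod. Qed.

End ResidueRing.

Lemma big_seq_selfinj (R : Type) (idx : R) (op : Monoid.com_law idx)
    (T : eqType) (s : seq T) (f : T -> T) (F : T -> R) :
  uniq s -> {in s &, injective f} -> {in s, forall x, f x \in s} ->
  \big[op/idx]_(x <- s) F (f x) = \big[op/idx]_(x <- s) F x.
Proof.
move=> s_uniq f_inj f_s; rewrite -(big_map f xpredT F); apply: perm_big.
have fs_uniq : uniq (map f s) by rewrite map_inj_in_uniq.
have fs_sub : {subset map f s <= s} by move=> _ /mapP[x xs ->]; apply: f_s.
have [_ fs_eq] := uniq_min_size fs_uniq fs_sub (eq_leq (esym (size_map f s))).
exact: uniq_perm.
Qed.

Lemma sum_mul_reindex (V : zmodType) (p u : nat) (F : nat -> V) :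
  prime p -> ~~ (p %| u)%N ->
  \sum_(1 <= a < p) F ((u * a) %% p)%N = \sum_(1 <= a < p) F a.
Proof.
move=> p_pr u_ndvd; have p_gt1 := prime_gt1 p_pr.
have u_unit : (u%:R : 'Z_p) \is a GRing.unit by rewrite unitZpE // prime_coprime.
apply: big_seq_selfinj; first exact: iota_uniq.
  move=> a b; rewrite !mem_index_iota => /andP[a1 ap] /andP[b1 bp] /eqP.
  rewrite -(Zn_natE p_gt1) !natrM => /eqP/(mulrI u_unit)/eqP.
  by rewrite Zn_natE // !modn_small // => /eqP.
move=> a; rewrite !mem_index_iota => /andP[a_gt0 a_lt_p].
rewrite ltn_mod (prime_gt0 p_pr) andbT lt0n; apply: contraL a_lt_p.
rewrite -/(dvdn p (u * a)) Euclid_dvdM // (negbTE u_ndvd) => /(dvdn_leq a_gt0).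
by rewrite -leqNgt.
Qed.

Lemma sum_shift_reindex (V : zmodType) (n k : nat) (F : nat -> V) : (0 < n)%N ->
  \sum_(0 <= b < n) F ((b + k) %% n)%N = \sum_(0 <= b < n) F b.
Proof.
move=> n_gt0; apply: big_seq_selfinj; first exact: iota_uniq.
  move=> a b; rewrite !mem_index_iota => /andP[_ a_lt] /andP[_ b_lt] /eqP.
  by rewrite eqn_modDr !modn_small // => /eqP.
by move=> a _; rewrite mem_index_iota ltn_pmod.
Qed.

Lemma sum_even_odd (V : zmodType) (n : nat) (F : nat -> V) :
  \sum_(0 <= i < 2 * n) F i =
  \sum_(0 <= b < n) F (2 * b)%N + \sum_(0 <= b < n) F (2 * b + 1)%N.
Proof.
elim: n => [|n IH]; first by rewrite !big_geq // addr0.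
by rewrite mulnS !big_nat_recr //= IH addn1 addrACA -!addrA.
Qed.

Definition qchar (p : nat) (x : 'Z_p) : int :=
  if x == 0 then 0 else if [exists y : 'Z_p, y ^+ 2 == x] then 1 else -1.

Lemma legendreE (p : nat) (z : int) : (1 < p)%N -> legendre z p = qchar (z%:~R : 'Z_p).
Proof.
move=> p_gt1; rewrite /legendre /qchar Zn_int_eq0 //; case: ifP => // _.
congr (if _ then _ else _); apply/existsP/existsP => [[x x2] | [y y2]].
  rewrite -(Zn_int_eq0 p_gt1) intrB subr_eq0 rmorphXn /= in x2.
  by exists ((x : nat)%:R); rewrite -(eqP x2).
have y_lt_p : (y < p)%N by rewrite -[p in (_ < p)%N](Zp_cast p_gt1).
exists (Ordinal y_lt_p).
rewrite -(Zn_int_eq0 p_gt1) intrB subr_eq0 rmorphXn /=.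
by rewrite -[((y : nat)%:Z)%:~R]/((y : nat)%:R) natr_Zp.
Qed.

Definition qchar_nat (p a : nat) : int := qchar (a%:R : 'Z_p).

Lemma legendreN1 p : (1 < p)%N -> legendre (-1) p = qchar_nat p p.-1.
Proof.
move=> p_gt1; rewrite legendreE // /qchar_nat; congr qchar; apply/eqP.
by rewrite intrN eq_sym -subr_eq0 opprK natr1 prednK ?pchar_Zp // ltnW.
Qed.

Section PrimitiveRoot.
Variables (p g : nat).
Hypotheses (p_pr : prime p) (p_odd : odd p) (g_root : primitive_root g p).

Let p_gt1 : (1 < p)%N := prime_gt1 p_pr.
Let q := p.-1.
Let gz : 'Z_p := g%:R.

Let q_gt0 : (0 < q)%N. Proof. by rewrite /q -subn1 subn_gt0. Qed.

Let q_even : odd q = false.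
Proof. by rewrite /q; case: p p_odd p_gt1 => // n /=; case: (odd n). Qed.

Lemma gz_order : gz ^+ q = 1.
Proof.
move: g_root => /andP[/andP[_ /eqP g_q] _]; rewrite totient_prime // in g_q.
by apply/eqP; rewrite /gz -natrX [1](_ : _ = 1%:R) // Zn_natE // g_q.
Qed.

Lemma gz_exp_neq1 k : (0 < k < q)%N -> gz ^+ k != 1.
Proof.
move=> /andP[k_gt0 k_lt_q]; move: g_root => /andP[_ /forallP g_min].
have k_lt_tot : (k < totient p)%N by rewrite totient_prime.
have := g_min (Ordinal k_lt_tot); rewrite /= k_gt0 /=.
by rewrite /gz -natrX [1](_ : _ = 1%:R) // Zn_natE.
Qed.

Lemma gz_unit : gz \is a GRing.unit.
Proof. by move: g_root => /andP[/andP[g_cop _] _]; rewrite unitZpE // coprime_sym. Qed.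

Lemma gz_exp_neq0 k : gz ^+ k != 0.
Proof. by apply: contraTneq (unitrX k gz_unit) => ->; rewrite unitr0. Qed.

Lemma gz_exp_inj m n : (m < q)%N -> (n < q)%N -> gz ^+ m = gz ^+ n -> m = n.
Proof.
wlog m_le_n : m n / (m <= n)%N.
  by move=> W m_lt n_lt e; case/orP: (leq_total m n) => h; [|symmetry]; apply: W.
move=> _ n_lt; rewrite -(subnKC m_le_n) exprD => e.
have gz_diff : gz ^+ (n - m) = 1.
  by apply: (mulrI (unitrX m gz_unit)); rewrite -e mulr1.
case: (posnP (n - m)) => [-> | diff_gt0]; first by rewrite addn0.
have : (0 < n - m < q)%N by rewrite diff_gt0 (leq_ltn_trans (leq_subr _ _) n_lt).
by move/gz_exp_neq1; rewrite gz_diff eqxx.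
Qed.

Lemma gz_exp_surj (x : 'Z_p) : x != 0 -> exists2 m, (m < q)%N & x = gz ^+ m.
Proof.
move=> x_neq0; pose pows := [set gz ^+ m | m : 'I_q].
have pows_sub : pows \subset [set~ 0].
  by apply/subsetP => _ /imsetP[m _ ->]; rewrite !inE gz_exp_neq0.
have card_pows : #|pows| = q.
  rewrite card_imset ?card_ord // => m n e.
  exact/val_inj/(gz_exp_inj (ltn_ord m) (ltn_ord n)).
have : pows == [set~ 0].
  have card_Zp_p : #|'Z_p| = p by rewrite card_ord Zp_cast.
  by rewrite eqEcard pows_sub cardsC1 card_Zp_p card_pows /q leqnn.
move=> /eqP pows_eq; have : x \in pows by rewrite pows_eq !inE.
by case/imsetP=> m _ ->; exists m.
Qed.

Lemma qchar_exp m : qchar (gz ^+ m) = (-1) ^+ m.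
Proof.
rewrite /qchar (negbTE (gz_exp_neq0 m)) -signr_odd.
case: (boolP (odd m)) => m_odd; last first.
  rewrite ifT //; apply/existsP; exists (gz ^+ m./2).
  by rewrite -exprM muln2 even_halfK.
rewrite ifF //; apply/negbTE/existsP => -[y /eqP y2].
have y_neq0 : y != 0.
  by apply: contraTneq (gz_exp_neq0 m) => y0; rewrite -y2 y0 expr0n.
have [n _ y_eq] := gz_exp_surj y_neq0.
move: y2; rewrite y_eq -exprM -(expr_mod _ gz_order) -[gz ^+ m](expr_mod _ gz_order).
move=> /(gz_exp_inj (ltn_pmod _ q_gt0) (ltn_pmod _ q_gt0)) /(congr1 odd).
by rewrite !odd_mod // oddM andbF m_odd.
Qed.

(* Multiplicativity: exponents of g add. *)
Lemma qcharM (x y : 'Z_p) : qchar (x * y) = qchar x * qchar y.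
Proof.
have [-> | x_neq0] := eqVneq x 0; first by rewrite mul0r /qchar eqxx mul0r.
have [-> | y_neq0] := eqVneq y 0; first by rewrite mulr0 /qchar eqxx mulr0.
have [m _ ->] := gz_exp_surj x_neq0; have [n _ ->] := gz_exp_surj y_neq0.
by rewrite -exprD !qchar_exp exprD.
Qed.

Lemma qchar_sqr (x : 'Z_p) : x != 0 -> qchar x * qchar x = 1.
Proof. by move=> /gz_exp_surj[m _ ->]; rewrite qchar_exp -expr2 sqrr_sign. Qed.

Lemma D1p_range a : a \in D1p g p -> (0 < a < p)%N.
Proof.
case/mapP=> k _ ->; rewrite ltn_mod (prime_gt0 p_pr) andbT lt0n.
apply: contra (gz_exp_neq0 (2 * k + 1)) => /eqP g_k.
by rewrite /gz -natrX -Zp_nat_mod // g_k.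
Qed.

Lemma D1p_memE a : (0 < a < p)%N -> (a \in D1p g p) = (qchar (a%:R : 'Z_p) == -1).
Proof.
move=> a_range; have /andP[_ a_lt_p] := a_range; apply/idP/idP.
  case/mapP=> k _ ->; rewrite Zp_nat_mod // natrX qchar_exp.
  by rewrite -signr_odd oddD oddM.
have [m m_lt_q a_eq] := gz_exp_surj (Zn_nat_neq0 p_gt1 a_range).
rewrite a_eq qchar_exp -signr_odd.
case: (boolP (odd m)) => m_odd // _; apply/mapP; exists m./2.
  rewrite mem_iota /= add0n /Defs.half -/q -(ltn_pmul2l (isT : (0 < 2)%N)).
  rewrite !mul2n (even_halfK (negbT q_even)) odd_halfK //.
  exact: leq_ltn_trans (leq_pred m) m_lt_q.
have -> : (2 * m./2 + 1 = m)%N by rewrite mul2n odd_halfK // addn1 prednK // odd_gt0.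
apply/eqP; rewrite -(modn_small a_lt_p) -Zn_natE //.
by rewrite natrX -a_eq.
Qed.

Lemma qchar_natM a b : qchar_nat p ((a * b) %% p) = qchar_nat p a * qchar_nat p b.
Proof. by rewrite /qchar_nat Zp_nat_mod // natrM qcharM. Qed.

Lemma qchar_nat_sqr a : (0 < a < p)%N -> qchar_nat p a * qchar_nat p a = 1.
Proof. by move=> a_range; apply/qchar_sqr/Zn_nat_neq0. Qed.

(* The character sums to 0: multiplying by the non-residue g permutes the
   summands and flips their sign. *)
Lemma qchar_nat_sum : \sum_(1 <= a < p) qchar_nat p a = 0.
Proof.
have g_ndvd : ~~ (p %| g)%N.
  apply: contra (gz_exp_neq0 1) => /eqP g_p.
  by rewrite expr1 /gz -Zp_nat_mod // g_p.
have g_nonres : qchar_nat p g = -1 by rewrite /qchar_nat -[g%:R]expr1 qchar_exp.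
have := sum_mul_reindex (qchar_nat p) p_pr g_ndvd.
under eq_big_nat => a _ do rewrite qchar_natM g_nonres.
by rewrite -mulr_sumr; move: (\sum_(1 <= a < p) _) => S; lia.
Qed.

Lemma D1p_indicator a : (0 < a < p)%N ->
  2 * ((a \in D1p g p) : nat)%:Z = 1 - qchar_nat p a.
Proof.
move=> a_range; rewrite D1p_memE // /qchar_nat.
have [m _ ->] := gz_exp_surj (Zn_nat_neq0 p_gt1 a_range).
by rewrite qchar_exp -signr_odd; case: (odd m).
Qed.

End PrimitiveRoot.

Definition gauss_sum (R : nzRingType) (p : nat) (chi : nat -> int) (x : R) : R :=
  \sum_(1 <= a < p) (chi a)%:~R * x ^+ a.

Definition period_sum (R : nzRingType) (p : nat) (x : R) : R :=
  \sum_(0 <= a < p) x ^+ a.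

Section GaussSum.
Variables (R : comNzRingType) (p : nat) (chi : nat -> int) (x : R).
Hypotheses (p_pr : prime p) (x_p : x ^+ p = 1)
  (chi_mul : forall a b, chi ((a * b) %% p)%N = chi a * chi b)
  (chi_sqr : forall a, (0 < a < p)%N -> chi a * chi a = 1)
  (chi_sum : \sum_(1 <= a < p) chi a = 0).

Let c a : R := (chi a)%:~R.
Let G := gauss_sum p chi x.
Let T := period_sum p x.

Lemma sum_nonzero_powers : \sum_(1 <= a < p) x ^+ a = T - 1.
Proof. by rewrite /T /period_sum [in RHS]big_ltn ?prime_gt0 // expr0 addrC addKr. Qed.

Lemma sum_powers_mul u : ~~ (p %| u)%N -> \sum_(1 <= a < p) x ^+ (u * a) = T - 1.
Proof.
move=> u_ndvd; rewrite -sum_nonzero_powers.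
rewrite -(sum_mul_reindex (fun b => x ^+ b) p_pr u_ndvd).
by apply: eq_bigr => a _; rewrite expr_mod.
Qed.

(* Substituting b := a b in the double sum G * G. *)
Lemma gauss_sum_sqr_double :
  G ^+ 2 = \sum_(1 <= b < p) (chi b)%:~R * \sum_(1 <= a < p) x ^+ ((1 + b) * a).
Proof.
rewrite expr2 {1}/G /gauss_sum mulr_suml.
transitivity (\sum_(1 <= a < p) \sum_(1 <= b < p) c b * x ^+ ((1 + b) * a)).
  apply: eq_big_nat => a /andP[a_gt0 a_lt_p].
  have a_ndvd : ~~ (p %| a)%N by rewrite gtnNdvd.
  rewrite /G /gauss_sum mulr_sumr -(sum_mul_reindex _ p_pr a_ndvd).
  apply: eq_bigr => b _.
  have c_aa : c a * c a = 1 by rewrite /c -intrM chi_sqr ?a_gt0.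
  rewrite chi_mul intrM -/(c a) -/(c b) expr_mod // mulnDl mul1n exprD mulnC.
  transitivity (c a * c a * (c b * (x ^+ a * x ^+ (b * a)))); first by ring.
  by rewrite c_aa mul1r.
by rewrite exchange_big_nat; apply: eq_bigr => b _; rewrite mulr_sumr.
Qed.

Lemma gauss_sum_sqr : G ^+ 2 = (chi p.-1)%:~R * (p%:R - T).
Proof.
have p_eq : p = p.-1.+1 by rewrite prednK ?prime_gt0.
have p1_ge1 : (1 <= p.-1)%N by rewrite -ltnS -p_eq prime_gt1.
have chi_sum' : \sum_(1 <= b < p.-1) c b = - c p.-1.
  apply/eqP; rewrite -addr_eq0; apply/eqP.
  by rewrite -big_nat_recr //= -p_eq /c -rmorph_sum chi_sum.
rewrite gauss_sum_sqr_double p_eq big_nat_recr //= -p_eq.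
rewrite (eq_big_nat _ _ (F2 := fun b => c b * (T - 1))); last first.
  move=> b /andP[b_gt0 b_lt]; rewrite sum_powers_mul // gtnNdvd //.
  by rewrite p_eq ltnS.
rewrite -mulr_suml chi_sum' add1n -p_eq.
rewrite (eq_bigr (fun => 1)) => [|a _]; last by rewrite exprM x_p expr1n.
have p_nat : (p%:R : R) = p.-1%:R + 1 by rewrite natr1 -p_eq.
rewrite sumr_const_nat subn1 p_nat.
ring.
Qed.

End GaussSum.

Section BinarySequence.
Variables (R : comNzRingType) (p : nat) (chi : nat -> int) (D : seq nat)
  (s : nat -> bool) (w h : R).
Hypotheses (p_pr : prime p) (p_odd : odd p) (w_2p : w ^+ (2 * p) = 1)
  (h_half : 2 * h = 1)
  (chi_mul : forall a b, chi ((a * b) %% p)%N = chi a * chi b)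
  (D_indicator : forall a, (0 < a < p)%N -> 2 * ((a \in D) : nat)%:Z = 1 - chi a)
  (D_0 : 0%N \notin D)
  (s_even : forall b, (b < p)%N -> s (2 * b)%N = (b == 0%N) || (b \in D))
  (s_odd : forall b, (b < p)%N -> s (2 * b + 1)%N = (((2 * b + 1) %% p)%N \in D)).

Let c a : R := (chi a)%:~R.
Let x := w ^+ 2.
Let G := gauss_sum p chi x.
Let T := period_sum p x.
Let p_gt0 : (0 < p)%N := prime_gt0 p_pr.
Let p_gt2 : (2 < p)%N.
Proof. by move: (prime_gt1 p_pr) p_odd; case: p => [|[|[|]]]. Qed.
Let x_p : x ^+ p = 1. Proof. by rewrite /x -exprM. Qed.

Lemma D_indicatorR a : (0 < a < p)%N -> ((a \in D) : nat)%:R = h * (1 - (chi a)%:~R).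
Proof.
move=> a_range; have := congr1 (fun z : int => z%:~R : R) (D_indicator a_range).
rewrite /= intrM intrB -/(c a) => /(congr1 (fun y => h * y)).
by rewrite mulrA (mulrC h) h_half mul1r.
Qed.

Lemma binary_sum_even :
  \sum_(0 <= b < p) (s (2 * b)%N : nat)%:R * w ^+ (2 * b) = 1 + h * (T - 1 - G).
Proof.
rewrite big_ltn // s_even // eqxx /= muln0 expr0 mulr1; congr (_ + _).
rewrite -(sum_nonzero_powers x p_pr) mulrBr !mulr_sumr -sumrB.
apply: eq_big_nat => b /andP[b_gt0 b_lt_p].
by rewrite s_even // gtn_eqF //= D_indicatorR ?b_gt0 // exprM -/x; ring.
Qed.

(* The odd positions, after the shift b |-> b + (p+1)/2 modulo p, contribute
   w^p sum_{0<c<p} [2c ∈ D] x^c. *)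
Lemma binary_sum_odd :
  \sum_(0 <= b < p) (s (2 * b + 1)%N : nat)%:R * w ^+ (2 * b + 1)
  = w ^+ p * h * (T - 1 - (chi 2)%:~R * G).
Proof.
pose k := (p./2).+1.
have k2 : (2 * k = p + 1)%N by have := odd_double_half p; rewrite p_odd -muln2 /k; lia.
pose F c0 := ((((2 * c0) %% p)%N \in D) : nat)%:R * (w ^+ p * x ^+ c0).
transitivity (\sum_(0 <= b < p) F ((b + k) %% p)%N).
  apply: eq_big_nat => b /andP[_ b_lt_p]; rewrite s_odd // /F.
  have shift2 : ((2 * ((b + k) %% p)) %% p = (2 * b + 1) %% p)%N.
    by rewrite modnMmr mulnDr k2 addnA addnAC modnDr addn1.
  rewrite shift2 -exprM -exprD -(expr_mod _ w_2p) -[in RHS](expr_mod _ w_2p).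
  congr (_ * (_ ^+ _)).
  rewrite muln_modr modnDmr (_ : p + 2 * (b + k) = 2 * b + 1 + 2 * p)%N ?modnDr //.
  by rewrite mulnDr k2; lia.
rewrite sum_shift_reindex // big_ltn // {1}/F muln0 mod0n (negbTE D_0) mul0r add0r.
rewrite -(sum_nonzero_powers x p_pr) /G /gauss_sum mulrBr !mulr_sumr -sumrB.
apply: eq_big_nat => c0 /andP[c0_gt0 c0_lt_p]; rewrite /F.
have c0_range : (0 < (2 * c0) %% p < p)%N.
  rewrite ltn_mod p_gt0 andbT lt0n -/(dvdn p (2 * c0)) Euclid_dvdM //.
  by rewrite !gtnNdvd.
by rewrite D_indicatorR // /c chi_mul intrM; ring.
Qed.

Lemma binary_sum :
  \sum_(0 <= i < 2 * p) (s i : nat)%:R * w ^+ i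
  = 1 + h * (T - 1 - G) + w ^+ p * h * (T - 1 - (chi 2)%:~R * G).
Proof. by rewrite sum_even_odd binary_sum_even binary_sum_odd. Qed.

End BinarySequence.

(* The set C_1 read off at even and odd positions: since g is odd, the odd
   elements of C_1 are D_1^(2p), whose members are determined modulo p by
   D_1^(p) (Chinese remaindering), and its even elements are 0 and 2 D_1^(p). *)
Section SupportC1.
Local Open Scope nat_scope.
Variables (p g : nat).
Hypotheses (p_pr : prime p) (p_odd : odd p) (g_odd : odd g)
  (g_root : primitive_root g p).

Lemma C1_even b : b < p ->
  ((2 * b) %% (2 * p) \in C1 g p) = (b == 0) || (b \in D1p g p).
Proof.
move=> b_lt_p; rewrite modn_small ?ltn_pmul2l // /C1 !mem_cat inE.
have -> : (2 * b \in D12p g p) = false.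
  apply/negbTE/negP => /mapP[k _ /(congr1 odd)].
  by rewrite odd_mod ?oddM // oddX g_odd orbT.
have -> : (2 * b \in twoD p (D1p g p)) = (b \in D1p g p).
  apply/mapP/idP => [[a a_D] | b_D].
    have /andP[_ a_lt_p] := D1p_range p_pr g_root a_D.
    by rewrite modn_small ?ltn_pmul2l // => /eqP; rewrite eqn_pmul2l // => /eqP ->.
  by exists b; rewrite // modn_small ?ltn_pmul2l.
by rewrite muln_eq0 /= orbC.
Qed.

Lemma C1_odd b : b < p ->
  ((2 * b + 1) %% (2 * p) \in C1 g p) = ((2 * b + 1) %% p \in D1p g p).
Proof.
move=> b_lt_p; rewrite modn_small; last lia.
rewrite /C1 !mem_cat inE addn1 /= orbF.
have -> : ((2 * b).+1 \in twoD p (D1p g p)) = false.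
  by apply/negbTE/negP => /mapP[a _ /(congr1 odd)]; rewrite /= oddM odd_mod ?oddM.
rewrite orbF; apply/mapP/mapP => -[k k_I k_eq]; exists k => //.
  by rewrite k_eq modn_dvdm ?dvdn_mull.
have : (2 * b).+1 = g ^ (2 * k + 1) %[mod 2 * p].
  apply/eqP; rewrite chinese_remainder ?coprime2n //; apply/andP; split; last exact/eqP.
  by rewrite !modn2 /= oddM oddX g_odd orbT.
by rewrite modn_small //; lia.
Qed.

End SupportC1.

Lemma mersenne_natz n : 2%:Z ^+ n - 1 = (2 ^ n - 1)%N%:Z.
Proof. by rewrite -subzn ?expn_gt0 //= -[in RHS]natz natrX. Qed.

Lemma mersenne_third n :
  ((2%:Z ^+ (2 * n) - 1) %/ 3)%Z = \sum_(0 <= a < n) 4 ^+ a.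
Proof.
have geom : 4 ^+ n - 1 = 3 * \sum_(0 <= a < n) (4 : int) ^+ a.
  elim: n => [|n IH]; first by rewrite big_geq.
  by rewrite big_nat_recr //= mulrDr -IH exprS; ring.
by rewrite exprM geom mulKz.
Qed.

Lemma S2_ringE (R : nzRingType) g p :
  (S2 g p)%:~R =
  \sum_(0 <= i < 2 * p) (((i %% (2 * p))%N \in C1 g p) : nat)%:R * 2 ^+ i :> R.
Proof.
rewrite /S2 rmorph_sum big_mkord; apply: eq_bigr => i _.
by rewrite rmorphM rmorphXn.
Qed.

Lemma period_ringE (R : nzRingType) n :
  ((\sum_(0 <= a < n) (4 : int) ^+ a)%:~R : R) = period_sum n (2 ^+ 2).
Proof. by rewrite rmorph_sum; apply: eq_bigr => a _; rewrite rmorphXn -natrX. Qed.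

Section MersenneResidues.
Variable n : nat.
Hypothesis n_gt0 : (0 < n)%N.
Local Notation M := (2 ^ (2 * n) - 1)%N.

Lemma mersenne_gt1 : (1 < M)%N.
Proof.
have : (2 ^ 2 <= 2 ^ (2 * n))%N by rewrite leq_exp2l // leq_pmulr.
by move=> n_2; rewrite ltn_subRL; apply: leq_trans n_2.
Qed.

Lemma Zn_mersenne_root : (2 : 'Z_M) ^+ (2 * n) = 1.
Proof.
apply/eqP; rewrite -natrX [1](_ : _ = 1%:R) // Zn_natE ?mersenne_gt1 //.
by rewrite -{1}[(2 ^ (2 * n))%N](@subnK 1) ?expn_gt0 // modnDl.
Qed.

Lemma Zn_mersenne_sqr_root : ((2 : 'Z_M) ^+ 2) ^+ n = 1.
Proof. by rewrite -exprM Zn_mersenne_root. Qed.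

End MersenneResidues.

Lemma Gp_ZnE p : prime p ->
  ((Gp p)%:~R : 'Z_(2 ^ (2 * p) - 1)) = gauss_sum p (qchar_nat p) (2 ^+ 2).
Proof.
move=> p_pr; have M_gt1 := mersenne_gt1 (prime_gt0 p_pr).
rewrite /Gp mersenne_natz Zn_modz // rmorph_sum; apply: eq_big_nat => a _.
by rewrite rmorphM rmorphXn /= (legendreE _ (prime_gt1 p_pr)) exprM.
Qed.

Theorem lemma9 (p g : nat) (inv2 : int) :
  prime p -> odd p -> odd g -> primitive_root g p -> primitive_root g (2 * p) ->
  (2 * inv2 = 1 %[mod 2%:Z ^+ (2 * p) - 1])%Z ->
  (S2 g p =
     (1 - (2%:Z ^+ p + 1) * inv2)
     + (2%:Z ^+ p + 1) * inv2 * ((2%:Z ^+ (2 * p) - 1) %/ 3)%Z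
     - inv2 * (legendre 2 p * 2%:Z ^+ p + 1) * Gp p
     %[mod 2%:Z ^+ (2 * p) - 1])%Z
  /\
  (Gp p ^+ 2 = legendre (-1) p * (p%:Z - ((2%:Z ^+ (2 * p) - 1) %/ 3)%Z)
     %[mod 2%:Z ^+ (2 * p) - 1])%Z.
Proof.
move=> p_pr p_odd g_odd g_root _ inv2P.
have p_gt0 := prime_gt0 p_pr; have p_gt1 := prime_gt1 p_pr.
have M_gt1 := mersenne_gt1 p_gt0.
rewrite mersenne_third mersenne_natz in inv2P *.
have h_half : 2 * (inv2%:~R : 'Z_(2 ^ (2 * p) - 1)) = 1.
  by move/eqP: inv2P; rewrite -Zn_intE // intrM => /eqP.
have chi_mul := qchar_natM p_pr p_odd g_root.
have D1p_0 : 0%N \notin D1p g p by apply/negP => /(D1p_range p_pr g_root).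
have S_eval := binary_sum (s := fun i => (i %% (2 * p))%N \in C1 g p)
  p_pr p_odd (Zn_mersenne_root p_gt0) h_half chi_mul
  (D1p_indicator p_pr p_odd g_root) D1p_0
  (C1_even p_pr g_odd g_root) (C1_odd p_pr p_odd g_odd g_root).
have G_sqr := gauss_sum_sqr p_pr (Zn_mersenne_sqr_root p_gt0) chi_mul
  (qchar_nat_sqr p_pr p_odd g_root) (qchar_nat_sum p_pr p_odd g_root).
(* Only the image of G_p modulo 2^(2p) - 1 matters. *)
move: (Gp p) (Gp_ZnE p_pr) => Gz Gz_img.
split; apply/eqP; rewrite -Zn_intE //.
  rewrite S2_ringE S_eval (legendreE 2 p_gt1) !(intrD, intrN, intrM).
  by rewrite Gz_img period_ringE rmorphXn; apply/eqP; ring.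
by rewrite rmorphXn /= Gz_img G_sqr legendreN1 // intrM intrB period_ringE.
Qed.
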